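(* Let $\theta\in(0,1)$, $T>0$, and let $b\in L^\infty([0,\infty),C_b^\theta(\mathbb{R}^d,\mathbb{R}^d))$, $\sigma\in L^\infty([0,\infty),C_b^{1+\theta}(\mathbb{R}^d,\mathbb{R}^d\otimes\mathbb{R}^d))$ be such that $a=\sigma\sigma^*$ is everywhere invertible with $\|a^{-1}\|_0:=\sup_{t,x}\|a^{-1}(t,x)\|_{HS}<\infty$. Let $\lambda>0$ be such that the unique solution $\psi=\psi_\lambda\in L^\infty([0,\infty),C_b^{2+\theta}(\mathbb{R}^d,\mathbb{R}^d))$ of $$\partial_t\psi+\tfrac12\mathrm{Tr}[a(t,x)\nabla^2\psi]+\langle b(t,x),\nabla\psi\rangle-\lambda\psi=b\quad\text{on }[0,\infty)\times\mathbb{R}^d$$ satisfies $\sup_{t,x}\|\nabla\psi(t,x)\|_{HS}\le\frac12$, and suppose that for each $t$ the map $\Psi_t(x)=x+\psi(t,x)$ is a $C^2$-diffeomorphism of $\mathbb{R}^d$ with inverse $\Psi_t^{-1}$, where $\nabla\Psi_t$, $\nabla^2\Psi_t$ and $\nabla\Psi_t^{-1}$ are bounded uniformly in $t$ and $\nabla\Psi_t^{-1}(x)=\sum_{k\ge0}[-\nabla\psi(t,\Psi_t^{-1}(x))]^k$. Define $$\hat\sigma(t,x)=\nabla\Psi_t(\Psi_t^{-1}(x))\,\sigma(t,\Psi_t^{-1}(x)),\qquad \hat b(t,x)=\lambda\,\psi(t,\Psi_t^{-1}(x)).$$ Then there exist positive constants $K_1,\kappa_1,\delta_1$ such that for all $0\le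 t\le T$ and $x,y\in\mathbb{R}^d$: (1) $\|\hat\sigma(t,x)-\hat\sigma(t,y)\|_{HS}^2+2\langle\hat b(t,x)-\hat b(t,y),x-y\rangle\le K_1|x-y|^2$; (2) $\hat\sigma(t,x)\hat\sigma(t,x)^*\ge\kappa_1^2\,\mathrm{Id}$; (3) $|(\hat\sigma(t,x)-\hat\sigma(t,y))(x-y)|\le\delta_1|x-y|$.
   Context: $L^\infty([0,\infty),C_b^{n+\theta})$ consists of bounded Borel functions on $[0,\infty)\times\mathbb{R}^d$ whose spatial derivatives up to order $n$ are bounded and whose $n$-th spatial derivatives are $\theta$-Hölder continuous in $x$ uniformly in $t$ (norms taken as Euclidean or Hilbert–Schmidt for vector/matrix-valued functions). $\|\cdot\|_{HS}$ is the Hilbert–Schmidt norm, and $A\ge c\,\mathrm{Id}$ means $\langle Az,z\rangle\ge c|z|^2$ for all $z$. *)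

From HB Require Import structures.
From mathcomp Require Import all_boot all_order all_algebra.
From mathcomp Require Import all_classical all_reals all_analysis.
Set Implicit Arguments. Unset Strict Implicit. Unset Printing Implicit Defensive.
Import Order.TTheory GRing.Theory Num.Theory.
Import numFieldNormedType.Exports.
Local Open Scope classical_set_scope.
Local Open Scope ring_scope.

Section Defs.
Variables (R : realType) (d : nat).

Definition evec (j : 'I_d) : 'cV[R]_d := delta_mx j 0.

Definition dotv (u v : 'cV[R]_d) : R := \sum_(i < d) u i 0 * v i 0.
Definition enorm (v : 'cV[R]_d) : R := Num.sqrt (dotv v v).
Definition hsnorm (A : 'M[R]_d) : R :=
  Num.sqrt (\sum_(i < d) \sum_(j < d) A i j ^+ 2).

Definition pderiv (f : 'cV[R]_d -> R) (j : 'I_d) : 'cV[R]_d -> R :=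
  fun x => derive1 (fun h : R => f (x + h *: evec j)) 0.
Definition has_pderiv (f : 'cV[R]_d -> R) (j : 'I_d) : Prop :=
  forall x, derivable (fun h : R => f (x + h *: evec j)) 0 1.

Fixpoint pdern (f : 'cV[R]_d -> R) (s : seq 'I_d) : 'cV[R]_d -> R :=
  match s with
  | [::] => f
  | j :: s' => pderiv (pdern f s') j
  end.

(* g : [0,oo) x R^d -> R belongs to L^oo([0,oo), C_b^{n+theta}(R^d)):
   Borel in t (for each x), all spatial partial derivatives up to order n
   exist, are bounded uniformly in (t,x), and the n-th ones are
   theta-Hoelder in x uniformly in t. *)
Definition LinfCb (n : nat) (theta : R) (g : R -> 'cV[R]_d -> R) : Prop :=
  (forall x, measurable_fun [set t : R | 0 <= t] (fun t => g t x)) /\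
  (forall t, 0 <= t -> forall s : seq 'I_d, (size s < n)%N ->
      forall j, has_pderiv (pdern (g t) s) j) /\
  (exists C : R, forall t, 0 <= t -> forall s : seq 'I_d, (size s <= n)%N ->
      forall x, `|pdern (g t) s x| <= C) /\
  (exists C : R, forall t, 0 <= t -> forall s : seq 'I_d, size s = n ->
      forall x y, `|pdern (g t) s x - pdern (g t) s y| <= C * enorm (x - y) `^ theta).

Definition LinfCb_vec (n : nat) (theta : R) (g : R -> 'cV[R]_d -> 'cV[R]_d) :=
  forall i : 'I_d, LinfCb n theta (fun t x => g t x i 0).

Definition LinfCb_mx (n : nat) (theta : R) (g : R -> 'cV[R]_d -> 'M[R]_d) :=
  forall i j : 'I_d, LinfCb n theta (fun t x => g t x i j).

Definition C2 (f : 'cV[R]_d -> R) : Prop :=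
  forall s : seq 'I_d, (size s <= 2)%N ->
    (continuous (pdern f s)) /\ ((size s < 2)%N -> forall j, has_pderiv (pdern f s) j).

Definition C2_vec (f : 'cV[R]_d -> 'cV[R]_d) : Prop :=
  forall i : 'I_d, C2 (fun x => f x i 0).

Definition jac (f : 'cV[R]_d -> 'cV[R]_d) (x : 'cV[R]_d) : 'M[R]_d :=
  \matrix_(i, j) pderiv (fun y => f y i 0) j x.

Definition hess_comp (f : 'cV[R]_d -> 'cV[R]_d) (i : 'I_d) (x : 'cV[R]_d) : 'M[R]_d :=
  \matrix_(k, l) pdern (fun y => f y i 0) [:: k; l] x.

(* the i-th component of the left-hand side operator of the PDE without d_t:
   (1/2) Tr[a Hess psi_i] + <b, grad psi_i> - lambda psi_i *)
Definition ell_op (a : 'M[R]_d) (bv : 'cV[R]_d) (lam : R)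
  (f : 'cV[R]_d -> 'cV[R]_d) (i : 'I_d) (x : 'cV[R]_d) : R :=
  2^-1 * \tr (a *m hess_comp f i x)
  + \sum_(k < d) bv k 0 * pderiv (fun y => f y i 0) k x
  - lam * f x i 0.

End Defs.

From HB Require Import structures.
From mathcomp Require Import all_boot all_order all_algebra.
From mathcomp Require Import all_classical all_reals all_analysis.
From mathcomp Require Import ring lra.
Set Implicit Arguments. Unset Strict Implicit. Unset Printing Implicit Defensive.
Import Order.TTheory GRing.Theory Num.Theory.
Import numFieldNormedType.Exports.
Local Open Scope classical_set_scope.
Local Open Scope ring_scope.

(* By the mean
   value theorem, applied one coordinate at a time, sigma, grad Psi and
   Psi^-1 are Lipschitz, since their first derivatives (resp. grad^2 Psi and
   grad Psi^-1) are bounded; hence sighat = (grad Psi sigma) o Psi^-1 and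
   bhat = lam psi o Psi^-1 = lam (id - Psi^-1) are Lipschitz and sighat is
   bounded, which gives (1) and (3).  For (2), |grad psi| <= 1/2 yields
   |z| <= 2 |(grad Psi)^T z|, and writing w = (sigma sigma^T)^-1 sigma (sigma^T w)
   bounds |w| by a multiple of |sigma^T w| depending only on the bounds for
   a^-1 and sigma. *)

Lemma lipschitz_of_derive1_bounded {R : realType} (f : R -> R) (C : R) :
  (forall s, derivable f s 1) -> (forall s, `|derive1 f s| <= C) ->
  forall a b, `|f b - f a| <= C * `|b - a|.
Proof.
move=> df dC a b.
wlog ab : a b / a <= b.
  move=> H; case: (leP a b) => [|/ltW] h; first exact: H.
  by rewrite distrC (distrC b); exact: H.
have cont : {within `[a, b], continuous f}%classic.
  by apply: derivable_within_continuous => x _; exact: df.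
have df' x : x \in `]a, b[ -> is_derive x 1 f (derive1 f x).
  by move=> _; rewrite derive1E; apply: derivableP; exact: df.
have [c _ ->] := MVT_segment ab df' cont.
by rewrite normrM (ger0_norm (x := b - a)) ?subr_ge0 // ler_wpM2r ?subr_ge0.
Qed.

Lemma sqr_sum_mul_le {R : realFieldType} {I : finType} (a b : I -> R) :
  (\sum_i a i * b i) ^+ 2 <= (\sum_i a i ^+ 2) * (\sum_i b i ^+ 2).
Proof.
set P := \sum_i a i ^+ 2; set Q := \sum_i b i ^+ 2; set S := \sum_i a i * b i.
have PQE : P * Q = \sum_i \sum_j a i ^+ 2 * b j ^+ 2.
  by rewrite mulr_suml; apply: eq_bigr => i _; rewrite mulr_sumr.
have SSE : S ^+ 2 = \sum_i \sum_j (a i * b i) * (a j * b j).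
  by rewrite expr2 mulr_suml; apply: eq_bigr => i _; rewrite mulr_sumr.
have lagrange : \sum_i \sum_j (a i * b j - a j * b i) ^+ 2 = 2 * (P * Q - S ^+ 2).
  transitivity (\sum_i \sum_j (a i ^+ 2 * b j ^+ 2 + a j ^+ 2 * b i ^+ 2
                               - 2 * ((a i * b i) * (a j * b j)))).
    by apply: eq_bigr => i _; apply: eq_bigr => j _; ring.
  under eq_bigr => i _ do rewrite sumrB big_split -(mulr_sumr _ _ _ 2).
  rewrite sumrB big_split -(mulr_sumr _ _ _ 2) -SSE -PQE.
  rewrite exchange_big /= -PQE; ring.
rewrite -subr_ge0 -(pmulr_rge0 _ (ltr0Sn R 1)) -lagrange.
by apply: sumr_ge0 => i _; apply: sumr_ge0 => j _; exact: sqr_ge0.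
Qed.

Lemma ler_sum_term {R : numDomainType} {I : finType} (F : I -> R) (i0 : I) :
  (forall i, 0 <= F i) -> F i0 <= \sum_i F i.
Proof. by move=> F0; rewrite (bigD1 i0) //= lerDl sumr_ge0. Qed.

Lemma sqr_le_of_normr_le {R : realDomainType} (a b : R) : `|a| <= b -> a ^+ 2 <= b ^+ 2.
Proof. by rewrite ler_norml => /andP[? ?]; nra. Qed.

Section EuclideanNorms.
Variables (R : realType) (d : nat).
Implicit Types (u v z : 'cV[R]_d) (A B M : 'M[R]_d).

Lemma ler_sum_ord_const (F : 'I_d -> R) (K : R) :
  (forall i, F i <= K) -> \sum_i F i <= d%:R * K.
Proof.
move=> FK; apply: le_trans (ler_sum _ (fun i _ => FK i)) _.
by rewrite sumr_const card_ord mulr_natl.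
Qed.

Lemma dotv_ge0 v : 0 <= dotv v v.
Proof. by apply: sumr_ge0 => i _; rewrite -expr2 sqr_ge0. Qed.

Lemma enorm_ge0 v : 0 <= enorm v.
Proof. exact: sqrtr_ge0. Qed.

Lemma enorm_sqr v : enorm v ^+ 2 = dotv v v.
Proof. by rewrite sqr_sqrtr // dotv_ge0. Qed.

Lemma hsnorm_ge0 A : 0 <= hsnorm A.
Proof. exact: sqrtr_ge0. Qed.

Lemma hsnorm_sqr A : hsnorm A ^+ 2 = \sum_i \sum_j A i j ^+ 2.
Proof.
by rewrite sqr_sqrtr // sumr_ge0 // => i _; rewrite sumr_ge0 // => j _; rewrite sqr_ge0.
Qed.

Lemma hsnorm_trmx A : hsnorm A^T = hsnorm A.
Proof.
rewrite /hsnorm exchange_big /=; congr Num.sqrt.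
by apply: eq_bigr => i _; apply: eq_bigr => j _; rewrite mxE.
Qed.

Lemma normr_coord_le_enorm v i : `|v i 0| <= enorm v.
Proof.
rewrite -(sqrtr_sqr (v i 0)) ler_sqrt ?dotv_ge0 // expr2.
by apply: (ler_sum_term (F := fun i => v i 0 * v i 0)) => k; rewrite -expr2 sqr_ge0.
Qed.

Lemma normr_entry_le_hsnorm A i j : `|A i j| <= hsnorm A.
Proof.
have row_ge0 k : 0 <= \sum_l A k l ^+ 2 by rewrite sumr_ge0 // => l _; rewrite sqr_ge0.
rewrite -(sqrtr_sqr (A i j)) ler_sqrt ?sumr_ge0 //.
apply: le_trans (ler_sum_term (F := fun k => \sum_l A k l ^+ 2) i row_ge0).
exact: (ler_sum_term (F := fun l => A i l ^+ 2) j (fun l => sqr_ge0 _)).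
Qed.

Lemma enorm_le_coord_bound v (K : R) : (forall i, `|v i 0| <= K) -> enorm v <= d%:R * K.
Proof.
move=> vK; apply: (@le_trans _ _ (Num.sqrt (d%:R * K ^+ 2))).
  rewrite ler_sqrt; last by rewrite mulr_ge0 ?sqr_ge0.
  by apply: ler_sum_ord_const => i; rewrite -expr2 sqr_le_of_normr_le.
have [->|d_neq0] := eqVneq d 0%N; first by rewrite !mul0r sqrtr0.
have K0 : 0 <= K by apply: le_trans (vK (Ordinal (neq0_lt0n (negbTE d_neq0)))).
rewrite -(ger0_norm (x := d%:R * K)) ?mulr_ge0 // -sqrtr_sqr ler_sqrt ?sqr_ge0 //.
by rewrite exprMn ler_wpM2r ?sqr_ge0 // -natrX ler_nat expnS expn1 leq_pmulr // lt0n.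
Qed.

Lemma hsnorm_sqr_le_entry_bound A (K : R) :
  (forall i j, `|A i j| <= K) -> hsnorm A ^+ 2 <= (d * d)%:R * K ^+ 2.
Proof.
move=> AK; rewrite hsnorm_sqr natrM -mulrA; apply: ler_sum_ord_const => i.
by apply: ler_sum_ord_const => j; exact: sqr_le_of_normr_le.
Qed.

Lemma dotv_le_coord_bound u v (K : R) :
  (forall i, `|u i 0| <= K) -> dotv u v <= d%:R * K * enorm v.
Proof.
move=> uK; apply: le_trans (ler_norm _) _; apply: le_trans (ler_norm_sum _ _ _) _.
rewrite -mulrA; apply: ler_sum_ord_const => i.
by rewrite normrM ler_pM // normr_coord_le_enorm.
Qed.

Lemma dotvE u v : dotv u v = (u^T *m v) 0 0.
Proof. by rewrite /dotv mxE; apply: eq_bigr => i _; rewrite mxE. Qed.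

Lemma dotv_mulmx_trmx M z : dotv ((M *m M^T) *m z) z = dotv (M^T *m z) (M^T *m z).
Proof. by rewrite !dotvE !trmx_mul trmxK !mulmxA. Qed.

Lemma dotv_mulmx_le M u : dotv (M *m u) (M *m u) <= hsnorm M ^+ 2 * dotv u u.
Proof.
rewrite hsnorm_sqr /dotv mulr_suml; apply: ler_sum => i _.
rewrite !mxE -expr2; under [X in _ <= _ * X]eq_bigr => j _ do rewrite -expr2.
exact: sqr_sum_mul_le.
Qed.

Lemma normr_mulmx_entry_le A B (KA KB : R) i j :
  (forall i j, `|A i j| <= KA) -> (forall i j, `|B i j| <= KB) ->
  `|(A *m B) i j| <= d%:R * (KA * KB).
Proof.
move=> AK BK; rewrite mxE; apply: le_trans (ler_norm_sum _ _ _) _.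
by apply: ler_sum_ord_const => k; rewrite normrM ler_pM.
Qed.

Lemma normr_mulmx_entry_sub_le A1 A2 B1 B2 (LA KA LB KB : R) i j :
  (forall i j, `|A1 i j - A2 i j| <= LA) -> (forall i j, `|A2 i j| <= KA) ->
  (forall i j, `|B1 i j - B2 i j| <= LB) -> (forall i j, `|B1 i j| <= KB) ->
  `|(A1 *m B1 - A2 *m B2) i j| <= d%:R * (LA * KB + KA * LB).
Proof.
move=> dA A2K dB B1K; rewrite !mxE -sumrB; apply: le_trans (ler_norm_sum _ _ _) _.
apply: ler_sum_ord_const => k.
rewrite (_ : _ - _ = (A1 i k - A2 i k) * B1 k j + A2 i k * (B1 k j - B2 k j)); last by ring.
by apply: le_trans (ler_normD _ _) _; rewrite !normrM lerD // ler_pM.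
Qed.

Definition l1norm v : R := \sum_i `|v i 0|.

Lemma l1norm_le_enorm v : l1norm v <= d%:R * enorm v.
Proof. by apply: ler_sum_ord_const => i; exact: normr_coord_le_enorm. Qed.

End EuclideanNorms.

Section PartialDerivatives.
Variables (R : realType) (d : nat).
Implicit Types (g : 'cV[R]_d -> R) (x y z : 'cV[R]_d).

Lemma derive1_along_evec g j z (s : R) : has_pderiv g j ->
  derivable (fun h : R => g (z + h *: evec R j)) s 1 /\
  derive1 (fun h : R => g (z + h *: evec R j)) s = pderiv g j (z + s *: evec R j).
Proof.
move=> gj.
have shiftE (h : R) : g (z + (h + s) *: evec R j) = g ((z + s *: evec R j) + h *: evec R j).
  by rewrite scalerDl addrA (addrAC z).
split.
  move: (gj (z + s *: evec R j)); rewrite /derivable.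
  match goal with |- cvg (?F @ _) -> cvg (?G @ _) =>
    have -> : G = F; [apply: funext => h /= | by []] end.
  by rewrite /shift /= scale0r !addr0 shiftE.
rewrite /pderiv /derive1.
match goal with |- lim (?F @ _) = lim (?G @ _) =>
  have -> : F = G; [apply: funext => h /= | by []] end.
by rewrite scale0r !addr0 shiftE.
Qed.

(* Walking [k] from [0] to [d] moves [x] to [y] one coordinate at a time. *)
Definition coord_mix (k : nat) x y : 'cV[R]_d :=
  \col_i (if (i < k)%N then y i 0 else x i 0).

Lemma coord_mix0 x y : coord_mix 0 x y = x.
Proof. by apply/matrixP => i c; rewrite !mxE ltn0 (ord1 c). Qed.

Lemma coord_mix_full x y : coord_mix d x y = y.
Proof. by apply/matrixP => i c; rewrite !mxE ltn_ord (ord1 c). Qed.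

Lemma coord_mixS k (lt_kd : (k < d)%N) x y (j := Ordinal lt_kd) :
  coord_mix k.+1 x y = coord_mix k x y + (y j 0 - x j 0) *: evec R j.
Proof.
apply/matrixP => i c; rewrite (ord1 c) !mxE /=.
have [->|neq_ij] := eqVneq i j; first by rewrite /= ltnn leqnn mulr1 addrC subrK.
have neq_ik : nat_of_ord i != k by apply: contra neq_ij => /eqP ik; apply/eqP/val_inj.
by rewrite ltnS leq_eqVlt (negbTE neq_ik) /= mulr0 addr0.
Qed.

Section BoundedPartials.
Variables (g : 'cV[R]_d -> R) (C : R).
Hypotheses (g_pderiv : forall j, has_pderiv g j)
  (pderiv_bounded : forall j x, `|pderiv g j x| <= C).

Lemma lipschitz_along_evec j z (a : R) :
  `|g (z + a *: evec R j) - g z| <= C * `|a|.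
Proof.
have gj := derive1_along_evec z _ (@g_pderiv j).
have := lipschitz_of_derive1_bounded (fun s => (gj s).1) _ 0 a.
rewrite scale0r addr0 subr0; apply=> s.
by rewrite (gj s).2.
Qed.

Lemma coord_mix_sub_le k x y : (k <= d)%N ->
  `|g (coord_mix k x y) - g x| <= C * \sum_(j < d | (j < k)%N) `|x j 0 - y j 0|.
Proof.
elim: k => [|k IHk] le_kd; first by rewrite coord_mix0 subrr normr0 big_pred0 ?mulr0.
set j := Ordinal le_kd.
rewrite (bigD1 j) //= (eq_bigl (fun i : 'I_d => (i < k)%N)); last first.
  move=> i; rewrite ltnS leq_eqVlt; case: (eqVneq i j) => [->|neq_ij] /=.
    by rewrite ltnn eqxx.
  suff /negbTE -> : nat_of_ord i != k by rewrite andbT.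
  by apply: contra neq_ij => /eqP ik; apply/eqP/val_inj.
rewrite mulrDr (coord_mixS le_kd).
set z := coord_mix k x y.
rewrite -[_ - g x](subrKA (g z)).
apply: le_trans (ler_normD _ _) _; apply: lerD; last exact: IHk (ltnW le_kd).
by rewrite (distrC (x _ 0)); exact: lipschitz_along_evec.
Qed.

Lemma lipschitz_of_pderiv_bounded x y : `|g x - g y| <= C * l1norm (x - y).
Proof.
rewrite distrC -{1}(coord_mix_full x y).
apply: le_trans (coord_mix_sub_le x y (leqnn d)) _.
suff -> : \sum_(j < d | (j < d)%N) `|x j 0 - y j 0| = l1norm (x - y) by [].
by apply: eq_big => [j|j _]; rewrite ?ltn_ord ?mxE.
Qed.

End BoundedPartials.

Lemma jac_add_id (f : 'cV[R]_d -> 'cV[R]_d) z :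
  (forall i j, has_pderiv (fun y => f y i 0) j) ->
  jac (fun y => y + f y) z = 1%:M + jac f z.
Proof.
move=> f_pderiv; apply/matrixP => i j; rewrite !mxE /pderiv.
pose c : R := evec R j i 0.
have -> : (fun h : R => (z + h *: evec R j + f (z + h *: evec R j)) i 0) =
    (cst (z i 0) + c *: (@id R)) + (fun h => f (z + h *: evec R j) i 0).
  by apply: funext => h; rewrite !fctE /c !mxE /= mulrC.
have lin_deriv : is_derive (0 : R) 1 (cst (z i 0) + c *: (@id R)) (0 + c *: 1).
  exact: is_deriveD.
rewrite derive1E deriveD //; last exact: f_pderiv i j z.
by rewrite derive_val derive1E add0r /c /evec mxE eqxx andbT [_ *: 1]mulr1.
Qed.

End PartialDerivatives.

Section Coercivity.
Variables (R : realType) (d : nat).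
Implicit Types (u v w z : 'cV[R]_d) (A S : 'M[R]_d).

Lemma dotv_add_le u v : dotv (u + v) (u + v) <= 2 * dotv u u + 2 * dotv v v.
Proof.
rewrite /dotv !mulr_sumr -big_split; apply: ler_sum => i _; rewrite !mxE.
rewrite -subr_ge0 (_ : 2 * _ + 2 * _ - _ = (u i 0 - v i 0) ^+ 2) ?sqr_ge0 //.
by ring.
Qed.

Lemma dotv_le_trmx_id_add A z : hsnorm A <= 2^-1 ->
  dotv z z <= 4 * dotv ((1%:M + A)^T *m z) ((1%:M + A)^T *m z).
Proof.
move=> A_small; set w := _ *m z; set v := A^T *m z.
have zE : z = w + - v by rewrite /w /v linearD /= trmx1 mulmxDl mul1mx addrK.
have vv_le : dotv v v <= 4^-1 * dotv z z.
  apply: le_trans (dotv_mulmx_le _ _) _; rewrite hsnorm_trmx ler_wpM2r ?dotv_ge0 //.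
  have : `|hsnorm A| <= 2^-1 by rewrite ger0_norm ?hsnorm_ge0.
  by move/sqr_le_of_normr_le; rewrite exprVn (_ : 2 ^+ 2 = 4 :> R) //; ring.
have := dotv_add_le w (- v); rewrite -zE.
have -> : dotv (- v) (- v) = dotv v v by apply: eq_bigr => i _; rewrite !mxE mulrNN.
move: vv_le; lra.
Qed.

Lemma dotv_le_mulmx_trmx S w : S *m S^T \in unitmx ->
  dotv w w <= hsnorm (invmx (S *m S^T) *m S) ^+ 2 * dotv (S^T *m w) (S^T *m w).
Proof.
move=> SS_unit.
have wE : w = (invmx (S *m S^T) *m S) *m (S^T *m w).
  by rewrite mulmxA -(mulmxA _ S) mulVmx // mul1mx.
by rewrite {1 2}wE; exact: dotv_mulmx_le.
Qed.

End Coercivity.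

Section TransformedCoefficients.
Unset Implicit Arguments.
Variables (R : realType) (d : nat) (lam Ks KJ Ka : R).
Variables (sig : 'cV[R]_d -> 'M[R]_d) (psi Pinv : 'cV[R]_d -> 'cV[R]_d).

Local Notation Psi := (fun y => y + psi y).
Local Notation sighat x := (jac Psi (Pinv x) *m sig (Pinv x)).
Local Notation bhat x := (lam *: psi (Pinv x)).

Hypotheses (lam_gt0 : 0 < lam) (Ks_ge0 : 0 <= Ks) (KJ_ge0 : 0 <= KJ).
Hypothesis sig_pderiv : forall i j k, has_pderiv (fun x => sig x i j) k.
Hypothesis sig_C1_bounded : forall i j (s : seq 'I_d), (size s <= 1)%N ->
  forall x, `|pdern (fun x => sig x i j) s x| <= Ks.
Hypothesis psi_pderiv : forall i k, has_pderiv (fun x => psi x i 0) k.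
Hypothesis jac_psi_small : forall x, hsnorm (jac psi x) <= 2^-1.
Hypothesis Pinv_rinv : forall y, Pinv y + psi (Pinv y) = y.
Hypotheses (Psi_C2 : C2_vec Psi) (Pinv_C2 : C2_vec Pinv).
Hypothesis Psi_bounded : forall x,
  hsnorm (jac Psi x) <= KJ /\ (forall i, hsnorm (hess_comp Psi i x) <= KJ) /\
  hsnorm (jac Pinv x) <= KJ.
Hypothesis sig_unit : forall x, sig x *m (sig x)^T \in unitmx.
Hypothesis sig_inv_bounded : forall x, hsnorm (invmx (sig x *m (sig x)^T)) <= Ka.

Lemma sig_entry_bounded x i j : `|sig x i j| <= Ks.
Proof. exact: (sig_C1_bounded i j [::]). Qed.

Lemma sig_entry_lip x y i j : `|sig x i j - sig y i j| <= Ks * l1norm (x - y).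
Proof.
apply: (lipschitz_of_pderiv_bounded (g := fun z => sig z i j)) => [k|k z].
  exact: sig_pderiv.
exact: (sig_C1_bounded i j [:: k]).
Qed.

Lemma jac_Psi_entry_bounded x i j : `|jac Psi x i j| <= KJ.
Proof. exact: le_trans (normr_entry_le_hsnorm _ i j) (Psi_bounded x).1. Qed.

Lemma jac_Psi_entry_lip x y i j :
  `|jac Psi x i j - jac Psi y i j| <= KJ * l1norm (x - y).
Proof.
rewrite !mxE.
apply: (lipschitz_of_pderiv_bounded (g := pderiv (fun z => Psi z i 0) j)) => [k|k z].
  exact: ((Psi_C2 i [:: j] isT).2 isT k).
apply: le_trans ((Psi_bounded z).2.1 i).
by have := normr_entry_le_hsnorm (hess_comp Psi i z) k j; rewrite mxE.
Qed.

Lemma Pinv_coord_lip x y i : `|Pinv x i 0 - Pinv y i 0| <= KJ * l1norm (x - y).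
Proof.
apply: (lipschitz_of_pderiv_bounded (g := fun z => Pinv z i 0)) => [k|k z].
  exact: ((Pinv_C2 i [::] isT).2 isT k).
apply: le_trans (Psi_bounded z).2.2.
by have := normr_entry_le_hsnorm (jac Pinv z) i k; rewrite mxE.
Qed.

Lemma l1norm_Pinv_sub_le x y :
  l1norm (Pinv x - Pinv y) <= d%:R ^+ 2 * KJ * enorm (x - y).
Proof.
apply: (@le_trans _ _ (d%:R * (KJ * l1norm (x - y)))).
  by apply: ler_sum_ord_const => i; rewrite !mxE; exact: Pinv_coord_lip.
rewrite expr2 -!mulrA; apply: ler_wpM2l => //; rewrite mulrCA.
by apply: ler_wpM2l; [exact: KJ_ge0 | exact: l1norm_le_enorm].
Qed.

Definition sighat_lip : R := 2 * d%:R ^+ 3 * KJ ^+ 2 * Ks.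

Lemma sighat_entry_lip x y i j :
  `|(sighat x - sighat y) i j| <= sighat_lip * enorm (x - y).
Proof.
set e := d%:R ^+ 2 * KJ * enorm (x - y).
have le_e u : 0 <= u -> u * l1norm (Pinv x - Pinv y) <= u * e.
  by move=> u0; apply: ler_wpM2l => //; exact: l1norm_Pinv_sub_le.
apply: le_trans
  (normr_mulmx_entry_sub_le (LA := KJ * e) (KA := KJ) (LB := Ks * e) i j _ _ _ _) _.
- by move=> k l; apply: le_trans (jac_Psi_entry_lip _ _ k l) (le_e _ KJ_ge0).
- by move=> k l; exact: jac_Psi_entry_bounded.
- by move=> k l; apply: le_trans (sig_entry_lip _ _ k l) (le_e _ Ks_ge0).
- by move=> k l; exact: sig_entry_bounded.
suff -> : d%:R * (KJ * e * Ks + KJ * (Ks * e)) = sighat_lip * enorm (x - y) by [].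
by rewrite /e /sighat_lip; ring.
Qed.

Lemma sighat_entry_bounded x i j : `|sighat x i j| <= d%:R * (KJ * Ks).
Proof.
exact: normr_mulmx_entry_le i j (jac_Psi_entry_bounded (Pinv x)) (sig_entry_bounded (Pinv x)).
Qed.

Lemma bhat_coord_lip x y i :
  `|(bhat x - bhat y) i 0| <= lam * (1 + d%:R * KJ) * enorm (x - y).
Proof.
have psiE z : psi (Pinv z) = z - Pinv z by rewrite -{2}(Pinv_rinv z) addrC addKr.
rewrite !psiE !mxE -mulrBr normrM gtr0_norm // -mulrA ler_pM2l // mulrDl mul1r.
rewrite (_ : _ - _ = (x i 0 - y i 0) - (Pinv x i 0 - Pinv y i 0)); last by ring.
apply: le_trans (ler_normB _ _) _; apply: lerD.
  by have := normr_coord_le_enorm (x - y) i; rewrite !mxE.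
apply: le_trans (Pinv_coord_lip x y i) _.
by rewrite [d%:R * KJ]mulrC -mulrA ler_wpM2l // l1norm_le_enorm.
Qed.

Definition monotonicity_const : R :=
  d%:R ^+ 2 * sighat_lip ^+ 2 + 2 * (d%:R * (lam * (1 + d%:R * KJ))) + 1.

Lemma monotonicity_const_gt0 : 0 < monotonicity_const.
Proof.
have lam_ge0 := ltW lam_gt0.
by rewrite /monotonicity_const ltr_pwDr // addr_ge0 ?mulr_ge0 ?sqr_ge0 ?addr_ge0 ?mulr_ge0.
Qed.

Lemma sighat_bhat_monotone x y :
  hsnorm (sighat x - sighat y) ^+ 2 + 2 * dotv (bhat x - bhat y) (x - y)
  <= monotonicity_const * enorm (x - y) ^+ 2.
Proof.
have hs_le := hsnorm_sqr_le_entry_bound (sighat_entry_lip x y).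
have dot_le := dotv_le_coord_bound (x - y) (bhat_coord_lip x y).
have e2_ge0 := sqr_ge0 (enorm (x - y)).
rewrite (_ : monotonicity_const * _ = (d * d)%:R * (sighat_lip * enorm (x - y)) ^+ 2
   + 2 * (d%:R * (lam * (1 + d%:R * KJ) * enorm (x - y)) * enorm (x - y))
   + enorm (x - y) ^+ 2); last by rewrite /monotonicity_const natrM; ring.
lra.
Qed.

Definition ellipticity_const : R :=
  Num.sqrt ((4 * (d%:R ^+ 2 * (d%:R * (Ka * Ks)) ^+ 2 + 1))^-1).

Lemma ellipticity_const_gt0 : 0 < ellipticity_const.
Proof. by rewrite sqrtr_gt0 invr_gt0 mulr_gt0 // ltr_pwDr // mulr_ge0 ?sqr_ge0. Qed.

Lemma sighat_elliptic x z :
  ellipticity_const ^+ 2 * enorm z ^+ 2 <= dotv ((sighat x *m (sighat x)^T) *m z) z.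
Proof.
pose Q := d%:R ^+ 2 * (d%:R * (Ka * Ks)) ^+ 2 + 1.
have Q_gt0 : 0 < Q by rewrite ltr_pwDr // mulr_ge0 ?sqr_ge0.
set S := sig (Pinv x); set w := (jac Psi (Pinv x))^T *m z.
have zz_le : dotv z z <= 4 * dotv w w.
  by rewrite /w jac_add_id //; exact: dotv_le_trmx_id_add.
have ww_le : dotv w w <= Q * dotv (S^T *m w) (S^T *m w).
  apply: le_trans (dotv_le_mulmx_trmx w (sig_unit _)) _.
  apply: ler_wpM2r; first exact: dotv_ge0.
  apply: le_trans (hsnorm_sqr_le_entry_bound _) _.
    move=> i j; apply: normr_mulmx_entry_le => [k l|k l]; last exact: sig_entry_bounded.
    exact: le_trans (normr_entry_le_hsnorm _ k l) (sig_inv_bounded _).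
  by rewrite natrM -expr2 lerDl.
rewrite /ellipticity_const -/Q sqr_sqrtr ?invr_ge0 ?mulr_ge0 ?(ltW Q_gt0) // enorm_sqr.
rewrite dotv_mulmx_trmx trmx_mul -mulmxA -/w -/S ler_pdivrMl ?mulr_gt0 //.
by apply: le_trans zz_le _; rewrite -mulrA ler_wpM2l.
Qed.

Definition sighat_sub_mul_const : R := 2 * d%:R ^+ 3 * KJ * Ks + 1.

Lemma sighat_sub_mul_const_gt0 : 0 < sighat_sub_mul_const.
Proof. by rewrite ltr_pwDr // !mulr_ge0. Qed.

Lemma sighat_sub_mul_le x y :
  enorm ((sighat x - sighat y) *m (x - y)) <= sighat_sub_mul_const * enorm (x - y).
Proof.
set B := 2 * (d%:R * (KJ * Ks)).
have D_le i j : `|(sighat x - sighat y) i j| <= B.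
  have -> : (sighat x - sighat y) i j = sighat x i j - sighat y i j by rewrite !mxE.
  rewrite (_ : B = d%:R * (KJ * Ks) + d%:R * (KJ * Ks)); last by rewrite /B; ring.
  by apply: le_trans (ler_normB _ _) _; rewrite lerD // sighat_entry_bounded.
apply: le_trans (enorm_le_coord_bound (K := d%:R * B * enorm (x - y)) _) _.
  move=> i; rewrite mxE; apply: le_trans (ler_norm_sum _ _ _) _.
  rewrite -mulrA; apply: ler_sum_ord_const => j.
  by rewrite normrM ler_pM // normr_coord_le_enorm.
rewrite !mulrA ler_wpM2r ?enorm_ge0 // /sighat_sub_mul_const /B.
by rewrite (_ : _ * _ = 2 * d%:R ^+ 3 * KJ * Ks) ?lerDl //; ring.
Qed.

End TransformedCoefficients.

Lemma exists_common_bound {R : realDomainType} {I : finType} (P : I -> R -> Prop) :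
  (forall i C C', C <= C' -> P i C -> P i C') -> (forall i, exists C, P i C) ->
  exists2 C, 0 <= C & forall i, P i C.
Proof.
move=> P_mono P_ex; have [C PC] := choice P_ex.
exists (\sum_i `|C i|) => [|i]; first exact: sumr_ge0.
apply: P_mono (PC i).
exact: le_trans (ler_norm _) (ler_sum_term (F := fun i => `|C i|) i (fun _ => normr_ge0 _)).
Qed.

Theorem lemma3p4 (R : realType) (d : nat) (theta T lam : R)
  (b : R -> 'cV[R]_d -> 'cV[R]_d) (sigma : R -> 'cV[R]_d -> 'M[R]_d)
  (psi : R -> 'cV[R]_d -> 'cV[R]_d) (Psiinv : R -> 'cV[R]_d -> 'cV[R]_d) :
  0 < theta < 1 -> 0 < T -> 0 < lam ->
  LinfCb_vec 0 theta b ->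
  LinfCb_mx 1 theta sigma ->
  (forall t x, 0 <= t -> sigma t x *m (sigma t x)^T \in unitmx) ->
  (exists C : R, forall t x, 0 <= t ->
      hsnorm (invmx (sigma t x *m (sigma t x)^T)) <= C) ->
  LinfCb_vec 2 theta psi ->
  (forall (i : 'I_d) x s t, 0 <= s -> s <= t ->
     lebesgue_measure.-integrable `[s, t]
       (EFin \o (fun r => b r x i 0 -
          ell_op (sigma r x *m (sigma r x)^T) (b r x) lam (psi r) i x)) /\
     psi t x i 0 - psi s x i 0 =
       \int[lebesgue_measure]_(r in `[s, t])
          (b r x i 0 - ell_op (sigma r x *m (sigma r x)^T) (b r x) lam (psi r) i x)) ->
  (forall t x, 0 <= t -> hsnorm (jac (psi t) x) <= 2^-1) ->
  (forall t, 0 <= t ->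
     (forall x, Psiinv t (x + psi t x) = x) /\
     (forall y, Psiinv t y + psi t (Psiinv t y) = y) /\
     C2_vec (fun x => x + psi t x) /\ C2_vec (Psiinv t)) ->
  (exists C : R, forall t x, 0 <= t ->
     hsnorm (jac (fun y => y + psi t y) x) <= C /\
     (forall i : 'I_d, hsnorm (hess_comp (fun y => y + psi t y) i x) <= C) /\
     hsnorm (jac (Psiinv t) x) <= C) ->
  (forall t x, 0 <= t -> forall i j : 'I_d,
     (fun n : nat =>
        (\sum_(k < n) (- jac (psi t) (Psiinv t x)) ^+ k) i j) @ \oo
     --> jac (Psiinv t) x i j) ->
  let sighat := fun t x =>
    jac (fun y => y + psi t y) (Psiinv t x) *m sigma t (Psiinv t x) in
  let bhat := fun t x => lam *: psi t (Psiinv t x) in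
  exists K1 kappa1 delta1 : R, 0 < K1 /\ 0 < kappa1 /\ 0 < delta1 /\
    forall t, 0 <= t <= T -> forall x y : 'cV[R]_d,
      [/\ hsnorm (sighat t x - sighat t y) ^+ 2
            + 2 * dotv (bhat t x - bhat t y) (x - y) <= K1 * enorm (x - y) ^+ 2,
          (forall z : 'cV[R]_d,
             kappa1 ^+ 2 * enorm z ^+ 2 <=
             dotv ((sighat t x *m (sighat t x)^T) *m z) z) &
          enorm ((sighat t x - sighat t y) *m (x - y)) <= delta1 * enorm (x - y)].
Proof.
move=> _ _ lam_gt0 _ sig_reg sig_unit [Ka sig_inv_bounded] psi_reg _ jac_psi_small
  Psi_diffeo [KJ Psi_bounded] _ sighat bhat.
have KJ_ge0 : 0 <= KJ := le_trans (hsnorm_ge0 _) (Psi_bounded 0 0 (lexx 0)).1.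
have [Ks Ks_ge0 sig_C1_bounded] : exists2 Ks, 0 <= Ks & forall ij : 'I_d * 'I_d,
    forall t, 0 <= t -> forall s : seq 'I_d, (size s <= 1)%N ->
    forall x, `|pdern (fun x => sigma t x ij.1 ij.2) s x| <= Ks.
  apply: exists_common_bound => [ij C C' le_CC' C_bound t t0 s s1 x|[i j]].
    exact: le_trans (C_bound t t0 s s1 x) le_CC'.
  exact: (sig_reg i j).2.2.1.
exists (monotonicity_const _ d lam Ks KJ), (ellipticity_const _ d Ks Ka),
  (sighat_sub_mul_const _ d Ks KJ).
split; first exact: monotonicity_const_gt0.
split; first exact: ellipticity_const_gt0.
split; first exact: sighat_sub_mul_const_gt0.
move=> t /andP[t_ge0 _] x y.
have [_ [Pinv_rinv [Psi_C2 Pinv_C2]]] := Psi_diffeo t t_ge0.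
have sig_pderiv i j k : has_pderiv (fun x => sigma t x i j) k.
  exact: (sig_reg i j).2.1 t t_ge0 [::] isT k.
have psi_pderiv i k : has_pderiv (fun x => psi t x i 0) k.
  exact: (psi_reg i).2.1 t t_ge0 [::] isT k.
have sig_C1 i j s : (size s <= 1)%N -> forall x, `|pdern (fun x => sigma t x i j) s x| <= Ks.
  exact: sig_C1_bounded (i, j) t t_ge0 s.
split.
- by apply: sighat_bhat_monotone => // z; apply: Psi_bounded.
- by move=> z; apply: sighat_elliptic => // z'; [apply: jac_psi_small | apply: sig_unit |
    apply: sig_inv_bounded].
- by apply: sighat_sub_mul_le => // z; apply: Psi_bounded.
Qed.
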